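(* Let $A$ be an antilinear operator on a complex $n$-dimensional space $W$, $\lambda>0$ real, $W_\lambda^{(k)}=\ker(A^2-\lambda^2 I)^k$ and $\widetilde W_\lambda^{(k)}=\{x\in W:(A-\lambda I)^kx=0\}$. If $v\in W_\lambda^{(k)}$, then there exist unique vectors $v_+,v_-\in\widetilde W_\lambda^{(k)}$ such that $v=v_++iv_-$.
   Context: An antilinear operator satisfies $A(zv+w)=\bar z Av+Aw$. *)

(* The complex field is modelled by an arbitrary
   numClosedFieldType C (algebraically closed field with conjugation z^*,
   imaginary unit 'i and order on reals); the complex n-dimensional space
   W is 'rV[C]_n. *)
From HB Require Import structures.
From mathcomp Require Import all_boot all_order all_algebra.
Set Implicit Arguments. Unset Strict Implicit. Unset Printing Implicit Defensive.
Import Order.TTheory GRing.Theory Num.Theory.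
Local Open Scope ring_scope.

Definition antilinear (C : numClosedFieldType) (n : nat)
  (A : 'rV[C]_n -> 'rV[C]_n) : Prop :=
  forall (z : C) (v w : 'rV[C]_n), A (z *: v + w) = z^* *: A v + A w.

Definition Wgen (C : numClosedFieldType) (n : nat)
  (A : 'rV[C]_n -> 'rV[C]_n) (lam : C) (k : nat) (v : 'rV[C]_n) : Prop :=
  iter k (fun x => A (A x) - lam ^+ 2 *: x) v = 0.

Definition Wtil (C : numClosedFieldType) (n : nat)
  (A : 'rV[C]_n -> 'rV[C]_n) (lam : C) (k : nat) (x : 'rV[C]_n) : Prop :=
  iter k (fun y => A y - lam *: y) x = 0.

(* Write [B = A - lam] and [D = A + lam]. Since [lam] is real, [B] and [D]
   are commuting additive maps with [A^2 - lam^2 = B D] and [D - B = 2 lam],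
   an invertible scalar. Hence [ker (B D)^k] splits as the direct sum of
   [ker B^k] and [ker D^k], by the usual induction on the two exponents.
   Antilinearity gives [B ('i z) = - 'i D z], so multiplication by ['i] maps
   [ker B^k] onto [ker D^k]: the [ker D^k] component of [v] is ['i v_-] with
   [v_-] in [ker B^k]. *)

From HB Require Import structures.
From mathcomp Require Import all_boot all_order all_algebra.
Import Order.TTheory GRing.Theory Num.Theory.
Set Implicit Arguments. Unset Strict Implicit. Unset Printing Implicit Defensive.
Local Open Scope ring_scope.

Lemma iter_comm (T : Type) (f h : T -> T) :
  (forall x, f (h x) = h (f x)) -> forall a x, iter a f (h x) = h (iter a f x).
Proof. by move=> fh; elim=> //= a IH x; rewrite IH fh. Qed.

Lemma iter_comp (T : Type) (f g : T -> T) :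
  (forall x, f (g x) = g (f x)) ->
  forall a x, iter a (f \o g) x = iter a f (iter a g x).
Proof. by move=> fg; elim=> //= a IH x; rewrite IH (iter_comm fg). Qed.

Section IterAdditive.
Variables (U : zmodType) (f : U -> U).
Hypothesis fD : {morph f : x y / x + y}.

Lemma addmorph0 : f 0 = 0.
Proof. by apply: (addrI (f 0)); rewrite -fD !addr0. Qed.

Lemma addmorphN : {morph f : x / - x}.
Proof. by move=> x; apply: (addrI (f x)); rewrite -fD !subrr addmorph0. Qed.

Lemma addmorphB : {morph f : x y / x - y}.
Proof. by move=> x y; rewrite fD addmorphN. Qed.

Lemma iter_addmorphD a : {morph iter a f : x y / x + y}.
Proof. by elim: a => //= a IH x y; rewrite -fD -IH. Qed.

Lemma iterS_eq0 a x : iter a f x = 0 -> iter a.+1 f x = 0.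
Proof. by rewrite iterS => ->; apply: addmorph0. Qed.

End IterAdditive.

Lemma iter_addmorphB (U : zmodType) (f : U -> U) :
  {morph f : x y / x + y} -> forall a, {morph iter a f : x y / x - y}.
Proof. by move=> fD a; apply/addmorphB/iter_addmorphD. Qed.

Section CommutingShift.
Variables (K : fieldType) (V : lmodType K) (f g : V -> V) (s : K).
Hypotheses (fD : {morph f : x y / x + y}) (fg : forall x, f (g x) = g (f x)).
Hypotheses (gf : forall x, g x - f x = s *: x) (s_neq0 : s != 0).

Let shiftE x : g x = f x + s *: x.
Proof. by rewrite -gf addrC subrK. Qed.

Let shiftD : {morph g : x y / x + y}.
Proof. by move=> x y; rewrite !shiftE fD scalerDr addrACA. Qed.

Let gf_comm x : g (f x) = f (g x).
Proof. by rewrite fg. Qed.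

(* [f] commutes with scaling by [s = g - f] because it commutes with [g]. *)
Let shift_scalerV x : f (s^-1 *: x) = s^-1 *: f x.
Proof.
have fZ y : f (s *: y) = s *: f y.
  by rewrite -gf (addmorphB fD) fg gf.
by apply: (scalerI s_neq0); rewrite -fZ !scalerA divff // !scale1r.
Qed.

Let shift_scalerV_g x : g (s^-1 *: x) = s^-1 *: g x.
Proof. by rewrite !shiftE shift_scalerV scalerDr !scalerA mulrC. Qed.

Lemma iter_ker_disjoint a b x :
  iter a f x = 0 -> iter b g x = 0 -> x = 0.
Proof.
elim: a b x => [|a IHa] b x; first by move=> /= ->.
elim: b x => [|b IHb] x fx0 gx0 //.
have fx : f x = 0.
  apply: (IHa b.+1); first by rewrite -iterSr.
  by rewrite (iter_comm gf_comm) gx0 (addmorph0 fD).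
have gx : g x = 0.
  apply: IHb; last by rewrite -iterSr.
  by rewrite (iter_comm fg) fx0 (addmorph0 shiftD).
by apply: (scalerI s_neq0); rewrite scaler0 -gf fx gx subrr.
Qed.

Lemma iter_ker_decomp a b v :
  iter a f (iter b g v) = 0 ->
  exists x y, [/\ iter a f x = 0, iter b g y = 0 & v = x + y].
Proof.
elim: a b v => [|a IHa] b v fgv0.
  by exists 0, v; rewrite add0r.
elim: b v fgv0 => [|b IHb] v fgv0.
  by exists v, 0; rewrite addr0.
have [x1 [y1 [fx1 gy1 gvE]]] : exists x y,
    [/\ iter a.+1 f x = 0, iter b g y = 0 & g v = x + y].
  by apply: IHb; rewrite -iterSr.
have [x2 [y2 [fx2 gy2 fvE]]] : exists x y,
    [/\ iter a f x = 0, iter b.+1 g y = 0 & f v = x + y].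
  by apply: (IHa b.+1); rewrite (iter_comm gf_comm) -iterSr.
exists (s^-1 *: (x1 - x2)), (s^-1 *: (y1 - y2)); split.
- rewrite (iter_comm shift_scalerV) (iter_addmorphB fD) fx1.
  by rewrite (iterS_eq0 fD fx2) subrr scaler0.
- rewrite (iter_comm shift_scalerV_g) (iter_addmorphB shiftD) gy2.
  by rewrite (iterS_eq0 shiftD gy1) subrr scaler0.
- by rewrite -scalerDr addrACA -opprD -gvE -fvE gf scalerA mulVf ?scale1r.
Qed.

Lemma iter_ker_decomp_uniq a b x y x' y' :
  iter a f x = 0 -> iter a f x' = 0 -> iter b g y = 0 -> iter b g y' = 0 ->
  x + y = x' + y' -> x = x' /\ y = y'.
Proof.
move=> fx fx' gy gy' exy.
have yE : y' - y = x - x'.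
  by apply/eqP; rewrite subr_eq addrAC exy addrAC subrr add0r.
have xE : x = x'.
  apply/eqP; rewrite -subr_eq0; apply/eqP.
  apply: (iter_ker_disjoint (a := a) (b := b)).
    by rewrite (iter_addmorphB fD) fx fx' subrr.
  by rewrite -yE (iter_addmorphB shiftD) gy gy' subrr.
by split=> //; move: exy; rewrite xE => /addrI.
Qed.

End CommutingShift.

Definition shiftI (R : pzRingType) (V : lmodType R) (A : V -> V) (c : R)
  (x : V) : V := A x - c *: x.

Section AntilinearShifts.
Variables (C : numClosedFieldType) (V : lmodType C) (A : V -> V).
Hypothesis hA : forall (z : C) (v w : V), A (z *: v + w) = z^* *: A v + A w.

Lemma antilinearD : {morph A : x y / x + y}.
Proof. by move=> x y; rewrite -[x]scale1r hA conjC1 !scale1r. Qed.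

Lemma antilinearZ c x : A (c *: x) = c^* *: A x.
Proof. by rewrite -[c *: x]addr0 hA (addmorph0 antilinearD) addr0. Qed.

Lemma shiftI_morphD c : {morph shiftI A c : x y / x + y}.
Proof. by move=> x y; rewrite /shiftI antilinearD scalerDr opprD addrACA. Qed.

Lemma shiftI_comm c d x : c \is Num.real -> d \is Num.real ->
  shiftI A c (shiftI A d x) = shiftI A d (shiftI A c x).
Proof.
move=> cR dR; rewrite /shiftI !(addmorphB antilinearD) !antilinearZ.
rewrite !conj_Creal // !scalerBr !scalerA mulrC !opprB !addrA.
by rewrite [LHS]addrAC [RHS]addrAC [in LHS](addrAC (A (A x))).
Qed.

Lemma shiftI_sub c d x : shiftI A d x - shiftI A c x = (c - d) *: x.
Proof. by rewrite /shiftI opprB addrC addrA subrK -scalerBl. Qed.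

Lemma shiftI_sqr c x : c \is Num.real ->
  A (A x) - c ^+ 2 *: x = shiftI A c (shiftI A (- c) x).
Proof.
move=> cR; rewrite /shiftI scaleNr opprK antilinearD antilinearZ conj_Creal //.
by rewrite scalerDr scalerA -expr2 opprD addrA addrK.
Qed.

Lemma iter_shiftI_imag k c e y : c \is Num.real -> e^* = - e ->
  iter k (shiftI A c) (e *: y) = ((-1) ^+ k * e) *: iter k (shiftI A (- c)) y.
Proof.
move=> cR; elim: k e y => [|k IH] e y eI; first by rewrite mul1r.
have stepE : shiftI A c (e *: y) = - e *: shiftI A (- c) y.
  by rewrite /shiftI antilinearZ eI scalerBr !scalerA mulrC mulrNN.
rewrite !iterSr stepE IH; last by rewrite rmorphN /= eI.
by rewrite exprS mulN1r mulNr mulrN.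
Qed.

Lemma iter_shiftI_imag_eq0 k c e y : c \is Num.real -> e^* = - e -> e != 0 ->
  (iter k (shiftI A c) (e *: y) = 0) <-> (iter k (shiftI A (- c)) y = 0).
Proof.
move=> cR eI e0; rewrite iter_shiftI_imag //.
have ke0 : (-1) ^+ k * e != 0 by rewrite mulf_neq0 ?signr_eq0.
split=> [|->]; last exact: scaler0.
by move/eqP; rewrite scaler_eq0 (negbTE ke0) => /eqP.
Qed.

End AntilinearShifts.

Theorem mainTheorem6 (C : numClosedFieldType) (n : nat)
  (A : 'rV[C]_n -> 'rV[C]_n) (hA : antilinear A)
  (lam : C) (hlamR : lam \is Num.real) (hlam : 0 < lam)
  (k : nat) (v : 'rV[C]_n) (hv : Wgen A lam k v) :
  exists! p : 'rV[C]_n * 'rV[C]_n,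
    [/\ Wtil A lam k p.1, Wtil A lam k p.2 & v = p.1 + 'i *: p.2].
Proof.
pose B := shiftI A lam; pose D := shiftI A (- lam).
have BD := shiftI_morphD hA lam.
have lamNR : - lam \is Num.real by rewrite rpredN.
have BD_comm x : B (D x) = D (B x) by apply: shiftI_comm.
have DB_sub x : D x - B x = (lam - - lam) *: x by apply: shiftI_sub.
have s_neq0 : lam - - lam != 0 by rewrite opprK gt_eqF ?addr_gt0.
have niI : (- 'i)^* = - (- 'i) :> C by rewrite rmorphN /= conjCi.
have ni_neq0 : - 'i != 0 :> C by rewrite oppr_eq0 neq0Ci.
have BDv : iter k B (iter k D v) = 0.
  rewrite -(iter_comp BD_comm) -hv; apply: eq_iter => x.
  by rewrite /= shiftI_sqr.
have [x [y [Bx Dy ->]]] := iter_ker_decomp BD BD_comm DB_sub s_neq0 BDv.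
have iK z : 'i *: (- 'i *: z) = z :> 'rV[C]_n.
  by rewrite scalerA mulrN mulCii opprK scale1r.
have niK z : - 'i *: ('i *: z) = z :> 'rV[C]_n.
  by rewrite scalerA mulNr mulCii opprK scale1r.
exists (x, - 'i *: y); split.
  split=> //=; last by rewrite iK.
  exact/(iter_shiftI_imag_eq0 hA _ _ hlamR niI ni_neq0).
move=> [p1 p2] /= [Bp1 Bp2 eq_v].
have Dip2 : iter k D ('i *: p2) = 0.
  by apply/(iter_shiftI_imag_eq0 hA _ _ hlamR niI ni_neq0); rewrite niK.
have [-> yE] := iter_ker_decomp_uniq BD BD_comm DB_sub s_neq0 Bx Bp1 Dy Dip2 eq_v.
by rewrite yE niK.
Qed.
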